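(* Let $\Sigma$ be a finite set with at least two elements and $L\subseteq T_\Sigma^\omega$ a tree language accepted by some Büchi tree automaton. Then there is a set $C\subseteq T_\Sigma^\omega\times\mathbb{T}_\infty$, closed in $T_\Sigma^\omega\times\mathbb{T}_\infty$ (for the Cantor topology), accepted by some Büchi tree automaton as a subset of $T_{\Sigma\times2}^\omega$ identified with $T_\Sigma^\omega\times T_2^\omega$, and such that $L=\pi_0[C]$.
   Context: $T_\Sigma^\omega$ is the set of maps $\{l,r\}^*\to\Sigma$ with the Cantor topology (distance $2^{-n}$, $n$ least length of a node where the trees differ). A Büchi tree automaton is $\mathcal{A}=(\Sigma,Q,q_0,Q_f,\Delta)$ with finite $Q$, $q_0\in Q$, $Q_f\subseteq Q$, $\Delta\subseteq Q\times\Sigma\times Q\times Q$; a run on $t$ is $\rho:\{l,r\}^*\to Q$ with $\rho(\lambda)=q_0$ ($\lambda$ the root) and $(\rho(u),t(u),\rho(ul),\rho(ur))\in\Delta$ for all $u$; it is accepting if every path of $\rho$ visits $Q_f$ infinitely often; $L(\mathcal{A})$ is the set of trees with an accepting run. A path is the sequence of labels along an infinite branch from the root. $\mathbb{T}_\infty$ is the set of $t\in T_{\{0,1\}}^\omega$ every path of which has infinitely many $1$'s. $\pi_0$ is the first projection. *)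

From mathcomp Require Import all_boot.
Unset Printing Implicit Defensive.

(* Directions: l = false, r = true.  Nodes are words over {l,r}; u·l = rcons u false. *)
Definition node := seq bool.

Definition tree (A : Type) := node -> A.

Definition branch_node (b : nat -> bool) (n : nat) : node := [seq b i | i <- iota 0 n].

Record buchi (Sigma : Type) := Buchi {
  bQ : finType;
  bq0 : bQ;
  bQf : pred bQ;
  bDelta : bQ -> Sigma -> bQ -> bQ -> bool
}.
Arguments bQ {Sigma} _.
Arguments bq0 {Sigma} _.
Arguments bQf {Sigma} _ _.
Arguments bDelta {Sigma} _ _ _ _ _.

Definition is_run {Sigma : Type} (A : buchi Sigma) (t : tree Sigma) (rho : tree (bQ A)) : Prop :=
  rho [::] = bq0 A /\
  forall u : node, bDelta A (rho u) (t u) (rho (rcons u false)) (rho (rcons u true)).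

Definition accepting_run {Sigma : Type} (A : buchi Sigma) (rho : tree (bQ A)) : Prop :=
  forall b : nat -> bool, forall N : nat, exists2 n, N <= n & bQf A (rho (branch_node b n)).

Definition accepts {Sigma : Type} (A : buchi Sigma) (t : tree Sigma) : Prop :=
  exists rho, is_run A t rho /\ accepting_run A rho.

(* T_infinity: every path has infinitely many 1's (label 1 = true). *)
Definition T_inf (s : tree bool) : Prop :=
  forall b : nat -> bool, forall N : nat, exists2 n, N <= n & s (branch_node b n) = true.

(* Two trees agree on all nodes of length < n (Cantor distance < 2^-n ... basic cylinder). *)
Definition agree_below {A : Type} (n : nat) (t t' : tree A) : Prop :=
  forall u : node, size u < n -> t u = t' u.

(* C ⊆ T_Sigma × T_inf is closed in the subspace T_Sigma × T_inf of the product of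
   Cantor spaces: every point of T_Sigma × T_inf adherent to C belongs to C. *)
Definition closed_in_TxTinf {Sigma : Type} (C : tree Sigma -> tree bool -> Prop) : Prop :=
  forall (t : tree Sigma) (s : tree bool), T_inf s ->
    (forall n : nat, exists t' s', C t' s' /\ agree_below n t t' /\ agree_below n s s') ->
    C t s.

Definition pair_tree {Sigma : Type} (t : tree Sigma) (s : tree bool) : tree (Sigma * bool) :=
  fun u => (t u, s u).

(* Take for C the pairs (t, s) such that some run of A on t marks with s exactly the
   nodes where it is in an accepting state, and s has infinitely many 1's on every path.
   Then such a run is accepting, so L is the projection of C, and C is recognised by the
   automaton reading the marks alongside the letters.  Closedness is König's lemma: the
   constraints on a marked run are local and the state set is finite, so a marking that
   can be matched to arbitrary depth by marked runs on nearby trees carries a full marked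
   run. *)

From Stdlib Require Import Classical ClassicalEpsilon.
From mathcomp Require Import all_boot.

Lemma uniform_bound_finType (T : finType) (P : T -> nat -> Prop) :
  (forall x m m', m <= m' -> P x m -> P x m') -> (forall x, exists m, P x m) ->
  exists M, forall x, P x M.
Proof.
move=> P_mono P_ex.
suff [M PM] : exists M, forall x, x \in enum T -> P x M.
  by exists M => x; apply: PM; rewrite mem_enum.
elim: (enum T) => [|y s [M PM]]; first by exists 0.
have [m Pym] := P_ex y.
exists (maxn m M) => x; rewrite inE => /orP[/eqP-> | x_s].
  exact: P_mono (leq_maxl m M) Pym.
exact: P_mono (leq_maxr m M) (PM x x_s).
Qed.

Section LocalLabelling.

Variables (Q : finType) (ok : node -> Q -> Q -> Q -> bool).

Definition ok_at (rho : tree Q) (u : node) : bool :=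
  ok u (rho u) (rho (rcons u false)) (rho (rcons u true)).

Definition extendable (u : node) (q : Q) (m : nat) : Prop :=
  exists2 rho : tree Q, rho u = q & forall w, size w < m -> ok_at rho (u ++ w).

Definition extendable_forever (u : node) (q : Q) : Prop := forall m, extendable u q m.

Lemma extendable_le u q m m' : m <= m' -> extendable u q m' -> extendable u q m.
Proof.
move=> le_mm' [rho rho_u ok_rho]; exists rho => // w w_m.
exact/ok_rho/(leq_trans w_m le_mm').
Qed.

Definition extendable_children (u : node) (q : Q) (p : Q * Q) : Prop :=
  [/\ ok u q p.1 p.2, extendable_forever (rcons u false) p.1
     & extendable_forever (rcons u true) p.2].

Lemma extendable_forever_children u q :
  extendable_forever u q -> exists p, extendable_children u q p.
Proof.
(* Otherwise every pair of child states fails at some depth, hence, Q * Q being finite,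
   all fail below a common depth M, against extendability of (u, q) to depth M + 1. *)
move=> ext_uq; apply: NNPP => no_children.
have bad_depth (p : Q * Q) : exists m, ok u q p.1 p.2 ->
    ~ (extendable (rcons u false) p.1 m /\ extendable (rcons u true) p.2 m).
  case ok_p : (ok u q p.1 p.2); last by exists 0.
  have [/not_all_ex_not[m Nm] | /not_all_ex_not[m Nm]] :
      ~ extendable_forever (rcons u false) p.1 \/ ~ extendable_forever (rcons u true) p.2.
    - by apply: not_and_or => -[? ?]; apply: no_children; exists p.
    - by exists m => _ [].
    - by exists m => _ [].
have [|M bad_M] := @uniform_bound_finType _ _ _ bad_depth.
  move=> p m m' le_mm' bad_m ok_p [ext_l ext_r].
  by apply: bad_m => //; split; apply: extendable_le le_mm' _.
have [rho rho_u ok_rho] := ext_uq M.+1.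
have ok_u : ok_at rho u by rewrite -[u]cats0; apply: ok_rho.
apply: (bad_M (rho (rcons u false), rho (rcons u true))); first by rewrite /= -rho_u.
by split; exists rho => // w w_M; rewrite cat_rcons; apply: ok_rho.
Qed.

(* The node is carried along the fold so that [nxt] can depend on it. *)
Definition unfold_labelling (nxt : node -> Q -> Q * Q) (q0 : Q) (w : node) : node * Q :=
  foldl (fun pq b => (rcons pq.1 b, if b then (nxt pq.1 pq.2).2 else (nxt pq.1 pq.2).1))
        ([::], q0) w.

Lemma unfold_labelling_node nxt q0 w : (unfold_labelling nxt q0 w).1 = w.
Proof. by elim/last_ind: w => [|w b IHw] //; rewrite /unfold_labelling foldl_rcons /= IHw. Qed.

Lemma unfold_labelling_rcons nxt q0 w b :
  (unfold_labelling nxt q0 (rcons w b)).2 =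
  let q := (unfold_labelling nxt q0 w).2 in if b then (nxt w q).2 else (nxt w q).1.
Proof.
by rewrite /unfold_labelling foldl_rcons /= -/(unfold_labelling _ _ _) unfold_labelling_node.
Qed.

Lemma labelling_from_approximations (q0 : Q) :
  (forall m, extendable [::] q0 m) ->
  exists2 rho : tree Q, rho [::] = q0 & forall u, ok_at rho u.
Proof.
move=> ext_root.
have [nxt nxtP] : exists nxt : node -> Q -> Q * Q,
    forall u q, extendable_forever u q -> extendable_children u q (nxt u q).
  have [|nxt nxtP] := choice (fun (uq : node * Q) p =>
    extendable_forever uq.1 uq.2 -> extendable_children uq.1 uq.2 p).
    move=> [u q]; have [/extendable_forever_children[p Pp] | not_ext] :=
      classic (extendable_forever u q); first by exists p.
    by exists (q, q) => /not_ext.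
  by exists (fun u q => nxt (u, q)) => u q; apply: (nxtP (u, q)).
pose rho w := (unfold_labelling nxt q0 w).2.
have rho_ext w : extendable_forever w (rho w).
  elim/last_ind: w => [|w b IHw]; first exact: ext_root.
  by rewrite /rho unfold_labelling_rcons; case: b; case: (nxtP _ _ IHw).
exists rho => // u; rewrite /ok_at /rho !unfold_labelling_rcons /=.
by case: (nxtP _ _ (rho_ext u)).
Qed.

End LocalLabelling.

Section MarkedRuns.

Context {Sigma : Type} (A : buchi Sigma).

Definition marked_run (t : tree Sigma) (s : tree bool) (rho : tree (bQ A)) : Prop :=
  is_run A t rho /\ forall u, s u = bQf A (rho u).

Lemma accepting_run_marked {t s rho} :
  marked_run t s rho -> accepting_run A rho <-> T_inf s.
Proof.
move=> [_ s_rho]; split=> acc b N; have [n le_Nn Hn] := acc b N; exists n => //.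
  by rewrite s_rho.
by rewrite -s_rho.
Qed.

Definition mark_automaton : buchi (Sigma * bool) :=
  @Buchi _ (bQ A) (bq0 A) (bQf A)
    (fun q x q1 q2 => bDelta A q x.1 q1 q2 && (x.2 == bQf A q)).

Lemma is_run_mark_automaton t s rho :
  is_run mark_automaton (pair_tree t s) rho <-> marked_run t s rho.
Proof.
split=> [[rho0 Drho] | [[rho0 Drho] s_rho]].
  by split; [split=> // u |move=> u]; have /andP[? /eqP] := Drho u.
by split=> // u; rewrite /= Drho s_rho eqxx.
Qed.

Lemma accepts_mark_automaton t s :
  accepts mark_automaton (pair_tree t s) <-> T_inf s /\ exists rho, marked_run t s rho.
Proof.
split=> [[rho [/is_run_mark_automaton mrho acc]] | [s_inf [rho mrho]]].
  by split; [exact/(accepting_run_marked mrho) | exists rho].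
exists rho; split; first exact/is_run_mark_automaton.
exact/(accepting_run_marked mrho).
Qed.

Lemma marked_run_closed t s :
  (forall n, exists t' s', (exists rho, marked_run t' s' rho) /\
                           agree_below n t t' /\ agree_below n s s') ->
  exists rho, marked_run t s rho.
Proof.
move=> near_ts.
pose ok u q q1 q2 := bDelta A q (t u) q1 q2 && (s u == bQf A q).
have [|rho rho0 ok_rho] := @labelling_from_approximations _ ok (bq0 A).
  move=> m; have [t' [s' [[rho [[rho0 Drho] s'_rho] [agree_t agree_s]]]]] := near_ts m.
  by exists rho => // w w_m; rewrite /ok_at /ok agree_t // agree_s // Drho s'_rho eqxx.
exists rho; split; first split=> // u.
  by have /andP[] := ok_rho u.
by move=> u; have /andP[_ /eqP] := ok_rho u.
Qed.

End MarkedRuns.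

Theorem lemma4p2 (Sigma : finType) (hS : 1 < #|Sigma|)
    (L : tree Sigma -> Prop)
    (hL : exists A : buchi Sigma, forall t, L t <-> accepts A t) :
  exists C : tree Sigma -> tree bool -> Prop,
    (forall t s, C t s -> T_inf s) /\
    closed_in_TxTinf C /\
    (exists B : buchi (Sigma * bool), forall t s, C t s <-> accepts B (pair_tree t s)) /\
    (forall t, L t <-> exists s, C t s).
Proof.
have [A LA] := hL.
exists (fun t s => T_inf s /\ exists rho, marked_run A t s rho).
split; first by move=> t s [].
split.
  move=> t s s_inf near_ts; split=> //; apply: marked_run_closed => n.
  by have [t' [s' [[_ run'] agree]]] := near_ts n; exists t', s'.
split.
  by exists (mark_automaton A) => t s; rewrite accepts_mark_automaton.
move=> t; rewrite LA; split=> [[rho [run acc]] | [s [s_inf [rho mrho]]]].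
  have mrho : marked_run A t (fun u => bQf A (rho u)) rho by [].
  exists (fun u => bQf A (rho u)).
  by split; [exact/(accepting_run_marked A mrho) | exists rho].
by exists rho; split; [case: mrho | exact/(accepting_run_marked A mrho)].
Qed.
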